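(* Let $\mathcal{C}'$ be an $[N,k]$ MDS code over a finite field $\mathbb{F}_q$ and let $G'=[a'_{i,j}]$ ($1\le i\le k$, $1\le j\le N$) be a generator matrix of $\mathcal{C}'$. Let $n$ be the order of the (cyclic) multiplicative subgroup of $\mathbb{F}_q^\times$ generated by all non-zero entries of $G'$, and let $\zeta_n'\in\mathbb{F}_q$ be a generator of this subgroup (a primitive $n$-th root of unity), so that every non-zero entry can be written as $a'_{i,j}=(\zeta_n')^{e_{i,j}}$ with $e_{i,j}$ an integer, unique modulo $n$. Let $\zeta_n=e^{2\pi i/n}\in\mathbb{C}$ and $K=\mathbb{Q}(\zeta_n)$. Define the $k\times N$ matrix $G=[a_{i,j}]$ over $K$ by $a_{i,j}=0$ if $a'_{i,j}=0$ and $a_{i,j}=\zeta_n^{e_{i,j}}$ if $a'_{i,j}=(\zeta_n')^{e_{i,j}}$. Then the code $\mathcal{C}\subseteq K^N$ generated by $G$ is an $[N,k]$ MDS code over $K$.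
   Context: A linear $[N,k]$ code over a field $F$ is a $k$-dimensional subspace of $F^N$; it is MDS if its minimum Hamming distance equals $N-k+1$, equivalently every $k\times k$ submatrix (choice of $k$ columns) of a $k\times N$ generator matrix is non-singular. *)

From HB Require Import structures.
From mathcomp Require Import all_boot all_order all_algebra all_fingroup all_field.
From mathcomp Require Import all_classical all_reals all_analysis.
From mathcomp Require Import complex.

Set Implicit Arguments.
Unset Strict Implicit.
Unset Printing Implicit Defensive.

Import GRing.Theory Num.Theory.
Local Open Scope ring_scope.

(* A k x N matrix G over a field F generates an [N,k] MDS code:
   the code it generates has dimension k (G has rank k), and every choice
   of k distinct columns of G gives a non-singular k x k submatrix. *)
Definition MDS_generator (F : fieldType) (k N : nat) (G : 'M[F]_(k, N)) : Prop :=
  \rank G = k /\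
  forall f : 'I_k -> 'I_N, injective f -> \det (colsub f G) != 0.

Definition nonzero_entries (F : finFieldType) (k N : nat) (A : 'M[F]_(k, N))
  : {set {unit F}} :=
  [set u : {unit F} | [exists i, exists j, FinRing.uval u == A i j]].

Definition zeta (R : realType) (n : nat) : R[i] :=
  (cos (2 * pi / n%:R) +i* sin (2 * pi / n%:R))%C.

Definition lift_matrix (F : fieldType) (R : realType) (k N n : nat)
  (A' : 'M[F]_(k, N)) (e : 'I_k -> 'I_N -> int) : 'M[R[i]]_(k, N) :=
  \matrix_(i < k, j < N) (if A' i j == 0 then 0 else zeta R n ^ (e i j)).

From HB Require Import structures.
From mathcomp Require Import all_boot all_order all_algebra all_fingroup all_field.
From mathcomp Require Import all_classical all_reals all_analysis.
From mathcomp Require Import complex.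
From mathcomp Require Import ring lra.
Import GRing.Theory Num.Theory.
Local Open Scope ring_scope.

Set Implicit Arguments.
Unset Strict Implicit.
Unset Printing Implicit Defensive.

(* Both z and zeta_n are primitive n-th roots of unity. After reducing the
   exponents modulo n, a k x k minor of G is P(zeta_n) and the corresponding
   minor of G' is P(z) for one and the same integer polynomial P, the
   determinant of a matrix of monomials. The cyclotomic polynomial Phi_n is
   monic with integer coefficients and is the minimal polynomial of zeta_n over
   Q, so P(zeta_n) = 0 forces P = Phi_n * Q in Z[X] and hence P(z) = 0. Thus
   every non-zero minor of G' lifts to a non-zero minor of G, and a single
   non-zero k x k minor gives rank k. *)

Lemma unit_order_primitive_root (R : finUnitRingType) (u : {unit R}) :
  #[u]%g.-primitive_root (FinRing.uval u).
Proof.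
rewrite /primitive_root_of_unity order_gt0; apply/forallP => i /=.
rewrite unity_rootE -FinRing.val_unitX -FinRing.val_unit1 val_eqE -cyclic.order_dvdn.
apply/eqP; apply/idP/eqP => [/(dvdn_leq (ltn0Sn i)) le_ord_i | ->]; last exact: dvdnn.
by apply/anti_leq; rewrite le_ord_i ltn_ord.
Qed.

Lemma zeta_exprn (R : realType) (n m : nat) :
  zeta R n ^+ m = (cos (m%:R * (2 * pi / n%:R)) +i* sin (m%:R * (2 * pi / n%:R)))%C.
Proof.
set t := 2 * pi / n%:R.
elim: m => [|m IHm]; first by rewrite expr0 !mul0r cos0 sin0.
rewrite exprSr IHm /zeta -/t -addn1 natrD mulrDl mul1r cosD sinD.
by apply/eqP; rewrite eq_complex /=; apply/andP; split; apply/eqP; ring.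
Qed.

Lemma zeta_primitive_root (R : realType) (n : nat) :
  (0 < n)%N -> n.-primitive_root (zeta R n).
Proof.
move=> n_gt0; rewrite /primitive_root_of_unity n_gt0; apply/forallP => i /=.
have n_neq0 : (n%:R : R) != 0 by rewrite pnatr_eq0 -lt0n.
rewrite unity_rootE zeta_exprn; have [-> | i_neq_n] := eqVneq i.+1 n.
  have -> : n%:R * (2 * pi / n%:R) = pi *+ 2 :> R by rewrite -mulr_natl; field.
  by rewrite cos2pi sin2pi eqxx.
rewrite eqbF_neg; apply/eqP => /(congr1 (@complex.Re R)) /=.
pose y : R := i.+1%:R * pi / n%:R.
have -> : i.+1%:R * (2 * pi / n%:R) = y + y by rewrite /y; field.
rewrite cosD => cos_2y.
(* 0 < y < pi gives sin y > 0, while cos (2 y) = 1 would force sin y = 0. *)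
have sin_y_gt0 : 0 < sin y.
  apply: sin_gt0_pi; apply/andP; split.
    by rewrite /y divr_gt0 ?mulr_gt0 ?pi_gt0 ?ltr0n.
  rewrite /y ltr_pdivrMr ?ltr0n // mulrC ltr_pM2l ?pi_gt0 // ltr_nat.
  by rewrite ltn_neqAle i_neq_n ltn_ord.
have := cos2Dsin2 y; rewrite expr2; nra.
Qed.

Lemma exprz_mod_order (R : comUnitRingType) (n : nat) (x : R) (e : int) :
  n.-primitive_root x -> x ^ e = x ^+ `|(e %% n)%Z|%N.
Proof.
move=> prim_x; have n_gt0 := prim_order_gt0 prim_x.
have x_unit : x \is a GRing.unit.
  by apply/unitrPr; exists (x ^+ n.-1); rewrite -exprS prednK // prim_expr_order.
rewrite {1}(divz_eq e n) mulrC exprzDr // -exprz_exp.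
have -> : x ^ Posz n = 1 by exact: prim_expr_order.
rewrite exp1rz mul1r {1}(_ : (e %% n)%Z = `|(e %% n)%Z|%N) //.
by rewrite gez0_abs // modz_ge0 // lt0n_neq0.
Qed.

Lemma root_Cyclotomic_prim (R : idomainType) (n : nat) (w : R) :
  n.-primitive_root w -> root (map_poly intr 'Phi_n) w.
Proof.
move=> prim_w; have n_gt0 := prim_order_gt0 prim_w.
have Phi_prod d : (0 < d)%N ->
    \prod_(d' <- divisors d) (map_poly intr 'Phi_d').[w] = w ^+ d - 1.
  move=> d_gt0; rewrite -horner_prod -rmorph_prod /= prod_Cyclotomic //.
  by rewrite rmorphB /= rmorph1 map_polyXn !hornerE.
have := Phi_prod n n_gt0; rewrite (prim_expr_order prim_w) subrr => /eqP.
rewrite prodf_seq_eq0 => /hasP[d]; rewrite -dvdn_divisors // => d_dv_n /= /eqP Phi_d_w.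
have [<- | d_neq_n] := eqVneq d n; first exact/eqP.
have d_gt0 : (0 < d)%N by apply: dvdn_gt0 d_dv_n.
have : w ^+ d - 1 = 0.
  by rewrite -Phi_prod // (big_rem d) -?dvdn_divisors //= Phi_d_w mul0r.
move/eqP; rewrite subr_eq0 -(prim_order_dvd prim_w) => n_dv_d.
by move: d_neq_n; rewrite eqn_dvd n_dv_d d_dv_n.
Qed.

Lemma map_poly_ratr_intr (L : numFieldType) (p : {poly int}) :
  map_poly (ratr : rat -> L) (map_poly intr p) = map_poly intr p.
Proof. by rewrite -map_poly_comp; apply: eq_map_poly => a /=; rewrite ratr_int. Qed.

Lemma Cyclotomic_dvdp_rootC (n : nat) (w : algC) (q : {poly rat}) :
  n.-primitive_root w -> (map_poly intr 'Phi_n %| q) = root (map_poly ratr q) w.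
Proof.
move=> prim_w; have [p [Dp _] p_dvd] := minCpolyP w.
suff -> : map_poly intr 'Phi_n = p by rewrite p_dvd.
apply: (map_inj_poly (fmorph_inj (ratr : {rmorphism rat -> algC}))); first exact: rmorph0.
by rewrite map_poly_ratr_intr (Cintr_Cyclotomic prim_w) -minCpoly_cyclotomic.
Qed.

Lemma Cyclotomic_dvdp_of_root (L : numFieldType) (n : nat) (w : L) (q : {poly rat}) :
  n.-primitive_root w -> root (map_poly ratr q) w -> map_poly intr 'Phi_n %| q.
Proof.
move=> prim_w q_w; set Phi := map_poly (intr : int -> rat) 'Phi_n.
have Phi_w : root (map_poly ratr Phi) w.
  by rewrite map_poly_ratr_intr root_Cyclotomic_prim.
have : ~~ coprimep q Phi.
  rewrite -(coprimep_map (ratr : {rmorphism rat -> L})).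
  by apply/negP => /coprimep_root/(_ q_w); rewrite (eqP Phi_w) eqxx.
(* A root in algC of gcdp q Phi is a primitive n-th root of unity. *)
rewrite /coprimep -(size_map_poly (ratr : {rmorphism rat -> algC})).
case/closed_rootP => w' gcd_w'.
have prim_w' : n.-primitive_root w'.
  have [z prim_z] := C_prim_root_exists (prim_order_gt0 prim_w).
  rewrite -(root_cyclotomic prim_z) -(Cintr_Cyclotomic prim_z) -map_poly_ratr_intr.
  by apply: root_dvdp gcd_w'; rewrite dvdp_map dvdp_gcdr.
rewrite (Cyclotomic_dvdp_rootC q prim_w').
by apply: root_dvdp gcd_w'; rewrite dvdp_map dvdp_gcdl.
Qed.

Lemma root_int_poly_prim_transfer (L : numFieldType) (K : idomainType) (n : nat)
    (w : L) (v : K) (P : {poly int}) :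
  n.-primitive_root w -> n.-primitive_root v ->
  root (map_poly intr P) w -> root (map_poly intr P) v.
Proof.
move=> prim_w prim_v P_w.
have P_eq := Pdiv.IdomainMonic.divp_eq (Cyclotomic_monic n) P.
set r := P %% 'Phi_n in P_eq.
suff r0 : r = 0 by rewrite P_eq r0 addr0 rmorphM rootM root_Cyclotomic_prim ?orbT.
have r_w : root (map_poly ratr (map_poly (intr : int -> rat) r)) w.
  move: P_w; rewrite map_poly_ratr_intr P_eq rmorphD rmorphM /= rootE.
  by rewrite hornerD hornerM (eqP (root_Cyclotomic_prim prim_w)) mulr0 add0r.
have size_intr (p : {poly int}) : size (map_poly (intr : int -> rat) p) = size p.
  by apply: size_map_inj_poly; [exact: intr_inj | exact: rmorph0].
apply/eqP; apply: contraTT (Cyclotomic_dvdp_of_root prim_w r_w) => r_neq0.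
apply/negP => /dvdp_leq; rewrite -size_poly_eq0 size_intr size_poly_eq0 => /(_ r_neq0).
by rewrite !size_intr leqNgt Pdiv.Idomain.ltn_modp monic_neq0 ?Cyclotomic_monic.
Qed.

Lemma det_monomial_mx (R : comNzRingType) (m : nat) (b : 'I_m -> 'I_m -> bool)
    (d : 'I_m -> 'I_m -> nat) (x : R) :
  \det (\matrix_(i, j) if b i j then x ^+ d i j else 0)
  = (map_poly intr (\det (\matrix_(i, j) if b i j then 'X^(d i j) else 0)
                    : {poly int})).[x].
Proof.
rewrite -horner_evalE -det_map_mx -det_map_mx; congr (\det _).
apply/matrixP => i j; rewrite !mxE.
by case: (b i j); rewrite /= ?map_polyXn ?map_poly0 horner_evalE ?hornerXn ?horner0.
Qed.

Lemma det_lift_neq0 (F : fieldType) (L : numFieldType) (m n : nat) (v : F) (w : L)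
    (M : 'M[F]_m) (e : 'I_m -> 'I_m -> int) :
  n.-primitive_root v -> n.-primitive_root w ->
  (forall i j, M i j != 0 -> M i j = v ^ e i j) ->
  \det M != 0 -> \det (\matrix_(i, j) if M i j == 0 then 0 else w ^ e i j) != 0.
Proof.
move=> prim_v prim_w M_pow; apply: contraNN => det_lift0.
pose d i j := `|(e i j %% n)%Z|%N.
have M_mono : M = \matrix_(i, j) if M i j != 0 then v ^+ d i j else 0.
  apply/matrixP => i j; rewrite mxE.
  by have [->|/M_pow->] := eqVneq (M i j) 0; rewrite ?(exprz_mod_order _ prim_v).
have lift_mono : \matrix_(i, j) (if M i j == 0 then 0 else w ^ e i j)
                 = \matrix_(i, j) if M i j != 0 then w ^+ d i j else 0.
  by apply/matrixP => i j; rewrite !mxE; case: eqP; rewrite ?(exprz_mod_order _ prim_w).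
rewrite lift_mono det_monomial_mx in det_lift0.
rewrite M_mono det_monomial_mx.
exact: root_int_poly_prim_transfer prim_w prim_v det_lift0.
Qed.

Lemma rank_of_det_colsub_neq0 (F : fieldType) (m n : nat) (A : 'M[F]_(m, n))
    (f : 'I_m -> 'I_n) :
  \det (colsub f A) != 0 -> \rank A = m.
Proof.
move=> det_neq0; apply/eqP; rewrite eqn_leq rank_leq_row /=.
have rank_minor : \rank (colsub f A) = m.
  by apply: mxrank_unit; rewrite unitmxE unitfE.
by rewrite -{1}rank_minor -[A in colsub _ A]mulmx1 -mulmx_colsub mxrankM_maxl.
Qed.

Theorem mainTheorem1 (F : finFieldType) (R : realType) (k N : nat)
  (A' : 'M[F]_(k, N)) (z : {unit F}) (n : nat) (e : 'I_k -> 'I_N -> int) :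
  MDS_generator A' ->
  (<<nonzero_entries A'>> = <[z]>)%g ->
  n = #[z]%g ->
  (forall i j, A' i j != 0 -> A' i j = (FinRing.uval z) ^ (e i j)) ->
  MDS_generator (lift_matrix R n A' e).
Proof.
(* Only the order of z matters; that z generates the entries is not needed. *)
move=> [rank_A' minor_A'] _ n_def A'_pow.
have prim_z : n.-primitive_root (FinRing.uval z).
  by rewrite n_def unit_order_primitive_root.
have prim_zeta := zeta_primitive_root R (prim_order_gt0 prim_z).
have minor_lift f : injective f -> \det (colsub f (lift_matrix R n A' e)) != 0.
  move=> f_inj; have := det_lift_neq0 (e := fun i j => e i (f j)) prim_z prim_zeta.
  have -> : colsub f (lift_matrix R n A' e)
            = \matrix_(i, j) if colsub f A' i j == 0 then 0 else zeta R n ^ e i (f j).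
    by apply/matrixP => i j; rewrite !mxE.
  by apply; [move=> i j; rewrite mxE => /A'_pow | exact: minor_A'].
split=> //.
have k_le_N : (k <= N)%N by rewrite -rank_A' rank_leq_col.
apply: (rank_of_det_colsub_neq0 (f := widen_ord k_le_N)).
by apply: minor_lift => a b /(congr1 val) /= /val_inj.
Qed.
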